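(* Let $G$ be an infinite locally finite graph and let $F$ be a spanning subgraph of $G$ that is faithful to $G$. If $F$ has a Hamiltonian circle, then $G$ has a Hamiltonian circle.
   Context: A ray is a one-way infinite path; two rays of a graph $H$ are equivalent in $H$ if for every finite $S\subseteq V(H)$ some component of $H-S$ contains tails of both; the classes are the ends of $H$. For finite $S$ and an end $\alpha$, $C(S,\alpha)$ is the component of $H-S$ containing tails of rays of $\alpha$. The Freudenthal compactification $|H|$ is the 1-complex of $H$ together with its ends, a basic open neighbourhood of an end $\alpha$ being, for finite $S$, the union of $C(S,\alpha)$, the ends whose rays have tails in $C(S,\alpha)$, and the inner points of edges between $S$ and $C(S,\alpha)$. A Hamiltonian circle of $H$ is the image of a homeomorphic embedding of $S^1$ into $|H|$ containing every vertex of $H$. A subgraph $F$ of $G$ is faithful to $G$ if (i) every end of $G$ contains a ray of $F$, and (ii) any two rays of $F$ are equivalent in $F$ if and only if they are equivalent in $G$. *)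

From Stdlib Require Import Reals List Relations.
Open Scope R_scope.

Section Graphs.
Variable V : Type.

Definition graph (H : V -> V -> Prop) : Prop :=
  (forall u v, H u v -> H v u) /\ (forall v, ~ H v v).

Definition subgraph (F G : V -> V -> Prop) : Prop := forall u v, F u v -> G u v.

Definition locally_finite (H : V -> V -> Prop) : Prop :=
  forall v, exists l : list V, forall u, H v u -> In u l.

Definition infinite_type : Prop := ~ exists l : list V, forall v, In v l.

Definition conn (H : V -> V -> Prop) (S : list V) (x y : V) : Prop :=
  ~ In x S /\ ~ In y S /\
  clos_refl_trans V (fun a b => H a b /\ ~ In a S /\ ~ In b S) x y.

Definition is_ray (H : V -> V -> Prop) (r : nat -> V) : Prop :=
  (forall n, H (r n) (r (S n))) /\ (forall m n, r m = r n -> m = n).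

Definition tail_in (H : V -> V -> Prop) (S : list V) (r : nat -> V) (x : V) : Prop :=
  exists k, forall n, (k <= n)%nat -> conn H S x (r n).

Definition ray_equiv (H : V -> V -> Prop) (r1 r2 : nat -> V) : Prop :=
  forall S : list V, exists x, tail_in H S r1 x /\ tail_in H S r2 x.

Definition is_end (H : V -> V -> Prop) (a : (nat -> V) -> Prop) : Prop :=
  exists r, is_ray H r /\ forall r', a r' <-> (is_ray H r' /\ ray_equiv H r r').

Definition faithful (F G : V -> V -> Prop) : Prop :=
  (forall r, is_ray G r -> exists r', is_ray F r' /\ ray_equiv G r r') /\
  (forall r1 r2, is_ray F r1 -> is_ray F r2 ->
     (ray_equiv F r1 r2 <-> ray_equiv G r1 r2)).

(* Points of the Freudenthal compactification |H|: points of the 1-complex are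
   represented by barycentric weights w : V -> R (a vertex v is the indicator
   of v, an inner point of edge uv has w u, w v > 0, w u + w v = 1, zero
   elsewhere); ends are represented by their set of rays. *)
Inductive point : Type :=
| P1 : (V -> R) -> point
| PEnd : ((nat -> V) -> Prop) -> point.

Definition vtx_pt (v : V) (w : V -> R) : Prop :=
  w v = 1 /\ forall x, x <> v -> w x = 0.

Definition on_edge (H : V -> V -> Prop) (u v : V) (w : V -> R) : Prop :=
  H u v /\ 0 < w u /\ 0 < w v /\ w u + w v = 1 /\
  forall x, x <> u -> x <> v -> w x = 0.

Definition valid (H : V -> V -> Prop) (p : point) : Prop :=
  match p with
  | P1 w => (exists v, vtx_pt v w) \/ (exists u v, on_edge H u v w)
  | PEnd a => is_end H a
  end.

Definition in_C (H : V -> V -> Prop) (S : list V) (a : (nat -> V) -> Prop) (x : V) : Prop :=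
  exists r, a r /\ tail_in H S r x.

Definition Chat (H : V -> V -> Prop) (S : list V) (a : (nat -> V) -> Prop) (q : point) : Prop :=
  valid H q /\
  ((exists x w, q = P1 w /\ vtx_pt x w /\ in_C H S a x) \/
   (exists x y w, q = P1 w /\ on_edge H x y w /\ (in_C H S a x \/ in_C H S a y)) \/
   (exists b, q = PEnd b /\ exists r x, b r /\ in_C H S a x /\ tail_in H S r x)).

Definition has_nbhd (H : V -> V -> Prop) (p : point) (O : point -> Prop) : Prop :=
  (exists v w, p = P1 w /\ vtx_pt v w /\
     exists eps, 0 < eps /\
       forall w', valid H (P1 w') -> 1 - eps < w' v -> O (P1 w')) \/
  (exists u v w, p = P1 w /\ on_edge H u v w /\
     exists eps, 0 < eps /\
       forall w', on_edge H u v w' -> Rabs (w' u - w u) < eps -> O (P1 w')) \/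
  (exists a, p = PEnd a /\ exists S : list V, forall q, Chat H S a q -> O q).

Definition open_in (H : V -> V -> Prop) (O : point -> Prop) : Prop :=
  forall p, valid H p -> O p -> has_nbhd H p O.

End Graphs.

Arguments P1 {V} _.
Arguments PEnd {V} _.

Definition on_circle (z : R * R) : Prop := fst z * fst z + snd z * snd z = 1.

Definition circ_open (U : R * R -> Prop) : Prop :=
  forall z, on_circle z -> U z ->
    exists eps, 0 < eps /\ forall z', on_circle z' ->
      Rabs (fst z' - fst z) < eps -> Rabs (snd z' - snd z) < eps -> U z'.

(* H has a Hamiltonian circle: the image of a homeomorphic embedding
   f : S^1 -> |H| containing every vertex. *)
Definition has_ham_circle {V : Type} (H : V -> V -> Prop) : Prop :=
  exists f : R * R -> point V,
    (forall z, on_circle z -> valid V H (f z)) /\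
    (forall z z', on_circle z -> on_circle z' -> f z = f z' -> z = z') /\
    (forall O, open_in V H O -> circ_open (fun z => O (f z))) /\
    (forall U, circ_open U -> exists W, open_in V H W /\
        forall z, on_circle z -> (U z <-> W (f z))) /\
    (forall v, exists z, on_circle z /\ exists w, f z = P1 w /\ vtx_pt V v w).

(* The inclusion F ⊆ G induces a map ι : |F| → |G| which is the identity on the 1-complex and
   sends an end of F to the end of G containing its rays.  Condition (ii) of faithfulness makes
   ι well defined and injective, and since F ⊆ G every basic neighbourhood Ĉ_F(S, α) is mapped
   into Ĉ_G(S, ια), so ι is continuous.  As G is locally finite, |G| is Hausdorff (a vertex is
   separated from an end by deleting its finitely many neighbours).  Hence, for a Hamiltonian
   circle σ : S¹ → |F|, the map ι ∘ σ is a continuous injection of a compact space into a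
   Hausdorff space, i.e. an embedding, and its image still contains every vertex. *)

From Stdlib Require Import Reals List Relations Lra Lia.
From Stdlib Require Import Classical FunctionalExtensionality PropExtensionality.
Open Scope R_scope.

Section Rays.
Variable V : Type.
Implicit Types (H F G : V -> V -> Prop) (S : list V) (r : nat -> V) (a b : (nat -> V) -> Prop).

Lemma clos_refl_trans_sym (E : V -> V -> Prop) :
  (forall x y, E x y -> E y x) ->
  forall x y, clos_refl_trans V E x y -> clos_refl_trans V E y x.
Proof. intros Esym x y Hxy; induction Hxy; eauto using clos_refl_trans. Qed.

Lemma conn_sym H S x y : graph V H -> conn V H S x y -> conn V H S y x.
Proof.
  intros [Hsym _] [Hx [Hy Hxy]]; split; [|split]; auto.
  apply clos_refl_trans_sym; auto. intros u v [Huv [Hu Hv]]; auto.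
Qed.

Lemma conn_trans H S x y z : conn V H S x y -> conn V H S y z -> conn V H S x z.
Proof. intros [Hx [_ Hxy]] [_ [Hz Hyz]]; split; [|split]; auto. eapply rt_trans; eauto. Qed.

Lemma conn_edge H S x y : H x y -> ~ In x S -> ~ In y S -> conn V H S x y.
Proof. intros Hxy Hx Hy; split; [|split]; auto. apply rt_step; auto. Qed.

Lemma conn_subgraph F G S x y : subgraph V F G -> conn V F S x y -> conn V G S x y.
Proof.
  intros FG [Hx [Hy Hxy]]; split; [|split]; auto. clear Hx Hy.
  induction Hxy as [u v [Huv Huv']| |]; eauto using clos_refl_trans.
Qed.

Lemma conn_incl H S1 S2 x y : incl S1 S2 -> conn V H S2 x y -> conn V H S1 x y.
Proof.
  intros S12 [Hx [Hy Hxy]]; split; [|split]; auto. clear Hx Hy.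
  induction Hxy as [u v [Huv [Hu Hv]]| |]; eauto using clos_refl_trans.
  apply rt_step; split; [|split]; auto.
Qed.

Lemma tail_in_conn H S r x y :
  graph V H -> tail_in V H S r x -> conn V H S x y -> tail_in V H S r y.
Proof.
  intros Hg [k Hk] Hxy; exists k; intros n Hn.
  eapply conn_trans; [apply conn_sym|]; eauto.
Qed.

Lemma tail_in_same_comp H S r x y :
  graph V H -> tail_in V H S r x -> tail_in V H S r y -> conn V H S x y.
Proof.
  intros Hg [k Hk] [l Hl]. apply (conn_trans _ _ _ (r (k + l)%nat)).
  - apply Hk; lia.
  - apply conn_sym; auto. apply Hl; lia.
Qed.

Lemma tail_in_subgraph F G S r x : subgraph V F G -> tail_in V F S r x -> tail_in V G S r x.
Proof. intros FG [k Hk]; exists k; intros; eapply conn_subgraph; eauto. Qed.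

Lemma tail_in_incl H S1 S2 r x : incl S1 S2 -> tail_in V H S2 r x -> tail_in V H S1 r x.
Proof. intros S12 [k Hk]; exists k; intros; eapply conn_incl; eauto. Qed.

Lemma is_ray_subgraph F G r : subgraph V F G -> is_ray V F r -> is_ray V G r.
Proof. intros FG [Hstep Hinj]; split; auto. Qed.

Lemma ray_eventually_avoids H r L :
  is_ray V H r -> exists k, forall n, (k <= n)%nat -> ~ In (r n) L.
Proof.
  intros [_ Hinj]. induction L as [|s L [k Hk]]; [exists 0%nat; simpl; auto|].
  destruct (classic (exists m, r m = s)) as [[m Hm]|Hs].
  - exists (Nat.max k (S m)). intros n Hn [Hns|HnL].
    + subst. apply Hinj in Hns. lia.
    + apply (Hk n); auto; lia.
  - exists k. intros n Hn [Hns|HnL]; [apply Hs; eauto|apply (Hk n); auto].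
Qed.

Lemma ray_tail_in H S r : is_ray V H r -> exists x, tail_in V H S r x.
Proof.
  intros Hr. destruct (ray_eventually_avoids H r S Hr) as [k Hk].
  exists (r k), k. intros n Hn. induction Hn.
  - split; [|split]; auto. apply rt_refl.
  - eapply conn_trans; eauto. apply conn_edge; auto. apply Hr.
Qed.

Lemma ray_equiv_refl H r : is_ray V H r -> ray_equiv V H r r.
Proof. intros Hr S. destruct (ray_tail_in H S r Hr) as [x Hx]; eauto. Qed.

Lemma ray_equiv_sym H r1 r2 : ray_equiv V H r1 r2 -> ray_equiv V H r2 r1.
Proof. intros E12 S. destruct (E12 S) as [x [H1 H2]]; eauto. Qed.

Lemma ray_equiv_trans H r1 r2 r3 :
  graph V H -> ray_equiv V H r1 r2 -> ray_equiv V H r2 r3 -> ray_equiv V H r1 r3.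
Proof.
  intros Hg E12 E23 S. destruct (E12 S) as [x [H1 H2]], (E23 S) as [y [H2' H3]].
  exists x; split; auto. apply (tail_in_conn H S r3 y x); auto.
  apply (tail_in_same_comp H S r2); auto.
Qed.

Lemma end_is_ray H a r : is_end V H a -> a r -> is_ray V H r.
Proof. intros [r0 [_ Ha]] Har. apply Ha in Har; tauto. Qed.

Lemma end_inhabited H a : is_end V H a -> exists r, a r.
Proof. intros [r0 [Hr0 Ha]]. exists r0. apply Ha; split; auto. apply ray_equiv_refl; auto. Qed.

Lemma end_ray_equiv H a r1 r2 : graph V H -> is_end V H a -> a r1 -> a r2 -> ray_equiv V H r1 r2.
Proof.
  intros Hg [r0 [_ Ha]] H1 H2. apply Ha in H1; apply Ha in H2.
  apply (ray_equiv_trans H r1 r0 r2 Hg); [apply ray_equiv_sym|]; tauto.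
Qed.

Lemma end_eq H a b r1 r2 : graph V H -> is_end V H a -> is_end V H b ->
  a r1 -> b r2 -> ray_equiv V H r1 r2 -> a = b.
Proof.
  intros Hg [ra [Hra Ha]] [rb [Hrb Hb]] H1 H2 E12.
  apply Ha in H1; apply Hb in H2.
  assert (Eab : ray_equiv V H ra rb).
  { eapply ray_equiv_trans; [| |apply ray_equiv_sym]; [|eapply ray_equiv_trans|]; eauto; tauto. }
  apply functional_extensionality; intro r; apply propositional_extensionality.
  rewrite Ha, Hb. split; intros [Hr Er]; split; auto; eapply ray_equiv_trans; eauto.
  apply ray_equiv_sym; auto.
Qed.

Lemma in_C_incl H S1 S2 a x : incl S1 S2 -> in_C V H S2 a x -> in_C V H S1 a x.
Proof. intros S12 [r [Har Hr]]; exists r; split; auto; eapply tail_in_incl; eauto. Qed.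

Lemma in_C_notin H S a x : in_C V H S a x -> ~ In x S.
Proof. intros [r [_ [k Hk]]]. apply (Hk k (le_n k)). Qed.

Lemma in_C_tail_in H S a r x :
  graph V H -> is_end V H a -> a r -> in_C V H S a x -> tail_in V H S r x.
Proof.
  intros Hg Ha Har [r' [Har' Hr']].
  destruct (end_ray_equiv H a r r' Hg Ha Har Har' S) as [y [Hy Hy']].
  eapply tail_in_conn; eauto. eapply tail_in_same_comp; eauto.
Qed.

End Rays.

Section Points.
Variable V : Type.
Variable H : V -> V -> Prop.
Hypothesis Hg : graph V H.

Lemma on_edge_weights u v w : on_edge V H u v w -> w u + w v = 1 /\ 0 < w u /\ 0 < w v.
Proof. intros [_ [Hu [Hv [Huv _]]]]; auto. Qed.

Lemma on_edge_support u v w x : on_edge V H u v w -> 0 < w x -> x = u \/ x = v.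
Proof.
  intros [_ [_ [_ [_ Hw]]]] Hx. destruct (classic (x = u)); auto.
  destruct (classic (x = v)); auto. rewrite Hw in Hx; auto; lra.
Qed.

Lemma on_edge_neq u v w : on_edge V H u v w -> u <> v.
Proof. intros [Huv _] <-. apply (proj2 Hg u Huv). Qed.

Lemma on_edge_sym u v w : on_edge V H u v w -> on_edge V H v u w.
Proof. intros [Huv [Hu [Hv [Hs Hw]]]]; split; [apply (proj1 Hg); auto|]. repeat split; auto; lra. Qed.

Lemma on_edge_ends u v u' v' w : on_edge V H u v w -> on_edge V H u' v' w ->
  (u = u' /\ v = v') \/ (u = v' /\ v = u').
Proof.
  intros E E'. destruct (on_edge_weights u v w E) as [_ [Hu Hv]].
  pose proof (on_edge_neq _ _ _ E). pose proof (on_edge_neq _ _ _ E').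
  destruct (on_edge_support _ _ _ u E' Hu), (on_edge_support _ _ _ v E' Hv); subst; tauto.
Qed.

Lemma on_edge_eq u v w w' : on_edge V H u v w -> on_edge V H u v w' -> w u = w' u -> w = w'.
Proof.
  intros [_ [_ [_ [Hs Hw]]]] [_ [_ [_ [Hs' Hw']]]] Hwu.
  apply functional_extensionality; intro x.
  destruct (classic (x = u)); [subst; auto|].
  destruct (classic (x = v)); [subst; lra|]. rewrite Hw, Hw'; auto.
Qed.

Lemma vtx_pt_not_on_edge x u v w : vtx_pt V x w -> ~ on_edge V H u v w.
Proof.
  intros [Hx Hw] E. destruct (on_edge_weights u v w E) as [_ [Hu Hv]].
  assert (u = x) by (apply NNPP; intro; rewrite Hw in Hu; auto; lra).
  assert (v = x) by (apply NNPP; intro; rewrite Hw in Hv; auto; lra).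
  subst. apply (on_edge_neq _ _ _ E); auto.
Qed.

Lemma vtx_pt_inj v v' w : vtx_pt V v w -> vtx_pt V v' w -> v = v'.
Proof. intros [Hv _] [_ Hw]. apply NNPP; intro. rewrite Hw in Hv; auto; lra. Qed.

Lemma vtx_pt_eq v w w' : vtx_pt V v w -> vtx_pt V v w' -> w = w'.
Proof.
  intros [Hv Hw] [Hv' Hw']. apply functional_extensionality; intro x.
  destruct (classic (x = v)); [subst; lra|]. rewrite Hw, Hw'; auto.
Qed.

Lemma valid_weight_le1 w x y : valid V H (P1 w) -> x <> y -> w x + w y <= 1.
Proof.
  intros [[v [Hv Hw]]|[u [v [Huv [Hu [Hv [Hs Hw]]]]]]] Hxy.
  - destruct (classic (x = v)), (classic (y = v)); subst; [tauto| | |];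
      try rewrite (Hw x) by auto; try rewrite (Hw y) by auto; lra.
  - assert (u <> v) by (intros <-; apply (proj2 Hg u Huv)).
    destruct (classic (x = u)), (classic (x = v)), (classic (y = u)), (classic (y = v));
      subst; try congruence;
      try rewrite (Hw x) by auto; try rewrite (Hw y) by auto; lra.
Qed.

End Points.

Section Neighbourhoods.
Variable V : Type.
Variable H : V -> V -> Prop.
Hypothesis Hg : graph V H.

Definition vertex_ball (v : V) (eps : R) (q : point V) : Prop :=
  exists w, q = P1 w /\ valid V H (P1 w) /\ 1 - eps < w v.

Definition edge_ball (u v : V) (w0 : V -> R) (eps : R) (q : point V) : Prop :=
  exists w, q = P1 w /\ on_edge V H u v w /\ Rabs (w u - w0 u) < eps.

Lemma has_nbhd_mono p (O O' : point V -> Prop) :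
  has_nbhd V H p O -> (forall q, O q -> O' q) -> has_nbhd V H p O'.
Proof.
  intros [[v [w [-> [Hv [eps [He HO]]]]]]|[[u [v [w [-> [E [eps [He HO]]]]]]]|[a [-> [S HO]]]]] OO'.
  - left; exists v, w; split; [|split]; auto; exists eps; auto.
  - right; left; exists u, v, w; split; [|split]; auto; exists eps; auto.
  - right; right; exists a; split; auto; exists S; auto.
Qed.

Lemma has_nbhd_full p : valid V H p -> has_nbhd V H p (fun _ => True).
Proof.
  destruct p as [w|a]; simpl.
  - intros [[v Hv]|[u [v E]]].
    + left; exists v, w; split; [|split]; auto; exists 1; split; auto; lra.
    + right; left; exists u, v, w; split; [|split]; auto; exists 1; split; auto; lra.
  - intros _; right; right; exists a; split; auto; exists nil; auto.
Qed.

Lemma Chat_incl S1 S2 a q : incl S1 S2 -> Chat V H S2 a q -> Chat V H S1 a q.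
Proof.
  intros S12 [Hq [[x [w [-> [Hx Cx]]]]|[[x [y [w [-> [E Cxy]]]]]|[b [-> [r [x [Hbr [Cx Hr]]]]]]]]];
    split; auto.
  - left; exists x, w; split; [|split]; auto; eapply in_C_incl; eauto.
  - right; left; exists x, y, w; split; [|split]; auto.
    destruct Cxy; [left|right]; eapply in_C_incl; eauto.
  - right; right; exists b; split; auto; exists r, x; split; [|split]; auto;
      [eapply in_C_incl|eapply tail_in_incl]; eauto.
Qed.

Lemma has_nbhd_inter p O1 O2 : has_nbhd V H p O1 -> has_nbhd V H p O2 ->
  has_nbhd V H p (fun q => O1 q /\ O2 q).
Proof.
  intros [[v [w [-> [Hv [eps [He HO]]]]]]|[[u [v [w [-> [E [eps [He HO]]]]]]]|[a [-> [S HO]]]]]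
    [[v' [w' [Ew' [Hv' [eps' [He' HO']]]]]]|[[u' [v' [w' [Ew' [E' [eps' [He' HO']]]]]]]|[a' [Ea' [S' HO']]]]];
    try discriminate; injection Ew' as <- || injection Ea' as <-;
    try (exfalso; eapply vtx_pt_not_on_edge; eauto; fail);
    try (pose proof (Rmin_l eps eps'); pose proof (Rmin_r eps eps')).
  - rewrite (vtx_pt_inj V v' v w Hv' Hv) in HO'.
    left; exists v, w; split; [|split]; auto; exists (Rmin eps eps'); split.
    + apply Rmin_glb_lt; auto.
    + intros w'' Hw'' Hlt; split; [apply HO|apply HO']; auto; lra.
  - right; left; exists u, v, w; split; [|split]; auto; exists (Rmin eps eps'); split.
    + apply Rmin_glb_lt; auto.
    + destruct (on_edge_ends V H Hg u v u' v' w E E') as [[<- <-]|[<- <-]];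
        intros w'' E'' Hlt; split; try (apply HO; auto; lra).
      * apply HO'; auto; lra.
      * apply HO'; [apply on_edge_sym; auto|].
        destruct (on_edge_weights V H _ _ _ E''), (on_edge_weights V H _ _ _ E).
        split_Rabs; lra.
  - right; right; exists a; split; auto; exists (S ++ S').
    intros q Hq; split; [apply HO|apply HO']; eapply Chat_incl; eauto;
      intros x Hx; apply in_or_app; auto.
Qed.

Lemma open_vertex_ball v eps : 0 < eps <= 1 -> open_in V H (vertex_ball v eps).
Proof.
  intros He p Hp [w [-> [Hw Hlt]]].
  destruct Hw as [[x [Hx Hw]]|[u [u' E]]].
  - assert (x = v) by (apply NNPP; intro; rewrite Hw in Hlt; auto; lra). subst x.
    left; exists v, w; split; [|split]; [auto|split; auto|].
    exists eps; split; [lra|]. intros w' Hw' Hlt'; exists w'; auto.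
  - right; left; exists u, u', w; split; [|split]; auto.
    destruct (on_edge_weights V H u u' w E).
    exists (w v - (1 - eps)); split; [lra|].
    intros w' E' Hlt'. exists w'; split; [|split]; [auto|right; eauto|].
    destruct (on_edge_weights V H u u' w' E').
    destruct (on_edge_support V H u u' w v E) as [->| ->]; [lra| |]; split_Rabs; lra.
Qed.

Lemma open_edge_ball u v w0 eps : open_in V H (edge_ball u v w0 eps).
Proof.
  intros p Hp [w [-> [E Hlt]]].
  right; left; exists u, v, w; split; [|split]; auto.
  exists (eps - Rabs (w u - w0 u)); split; [lra|].
  intros w' E' Hlt'; exists w'; split; [|split]; auto. split_Rabs; lra.
Qed.

Lemma in_C_of_tail_in S a b r x y : is_end V H b -> b r ->
  in_C V H S a x -> tail_in V H S r x -> in_C V H S b y -> in_C V H S a y.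
Proof.
  intros Hb Hbr [r' [Har' Hr'x]] Hrx Cy.
  exists r'; split; auto. eapply tail_in_conn; eauto.
  eapply tail_in_same_comp; [| |apply (in_C_tail_in V H S b r y)]; eauto.
Qed.

Lemma open_Chat S a : open_in V H (Chat V H S a).
Proof.
  intros p Hp [Hv [[x [w [-> [Hx Cx]]]]|[[x [y [w [-> [E Cxy]]]]]|[b [-> [r [x [Hbr [Cx Hrx]]]]]]]]].
  - left; exists x, w; split; [|split]; auto; exists (1/2); split; [lra|].
    intros w' Hw' Hlt; split; auto.
    destruct Hw' as [[y [Hy Hw']]|[u [u' E]]].
    + assert (y = x) by (apply NNPP; intro; rewrite Hw' in Hlt; auto; lra); subst y.
      left; exists x, w'; split; [|split]; [auto|split; auto|auto].
    + right; left; exists u, u', w'; split; [|split]; auto.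
      destruct (on_edge_support V H u u' w' x E) as [<-| <-]; auto; lra.
  - right; left; exists x, y, w; split; [|split]; auto; exists 1; split; [lra|].
    intros w' E' _; split; [right; eauto|right; left; exists x, y, w'; auto].
  - right; right; exists b; split; auto; exists S.
    intros q [Hq [[x' [w [-> [Hx' Cx']]]]|[[x' [y [w [-> [E Cxy]]]]]|[c [-> [r' [x' [Hcr' [Cx' Hr'x']]]]]]]]];
      split; auto.
    + left; exists x', w; split; [|split]; auto; eapply in_C_of_tail_in; eauto.
    + right; left; exists x', y, w; split; [|split]; auto.
      destruct Cxy; [left|right]; eapply in_C_of_tail_in; eauto.
    + right; right; exists c; split; auto; exists r', x'; split; [|split]; auto.
      eapply (in_C_of_tail_in S a b r x x'); eauto.
Qed.

Lemma vertex_ball_center v w eps : vtx_pt V v w -> 0 < eps -> vertex_ball v eps (P1 w).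
Proof. intros [Hv Hw] He; exists w; split; [|split]; auto; [left; exists v; split|]; auto; lra. Qed.

Lemma edge_ball_center u v w eps : on_edge V H u v w -> 0 < eps -> edge_ball u v w eps (P1 w).
Proof. intros E He; exists w; split; [|split]; auto. rewrite Rminus_diag, Rabs_R0; auto. Qed.

Lemma Chat_center S a : is_end V H a -> Chat V H S a (PEnd a).
Proof.
  intros Ha; split; auto. right; right; exists a; split; auto.
  destruct (end_inhabited V H a Ha) as [r Har].
  destruct (ray_tail_in V H S r (end_is_ray V H a r Ha Har)) as [x Hrx].
  exists r, x; split; [|split]; auto. exists r; auto.
Qed.

End Neighbourhoods.

Definition separated V H (p q : point V) : Prop :=
  exists Np Nq, open_in V H Np /\ Np p /\ open_in V H Nq /\ Nq q /\
    forall x, Np x -> Nq x -> False.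

Section Hausdorff.
Variable V : Type.
Variable H : V -> V -> Prop.
Hypothesis Hg : graph V H.
Hypothesis Hlf : locally_finite V H.

Lemma separated_sym p q : separated V H p q -> separated V H q p.
Proof. intros [Np [Nq [Op [Hp [Oq [Hq D]]]]]]; exists Nq, Np; repeat (split; auto); eauto. Qed.

Lemma separated_vtx_vtx v v' w w' :
  vtx_pt V v w -> vtx_pt V v' w' -> w <> w' -> separated V H (P1 w) (P1 w').
Proof.
  intros Hv Hv' Hne. assert (Hvv' : v <> v') by (intros <-; apply Hne; eapply vtx_pt_eq; eauto).
  exists (vertex_ball V H v (1/2)), (vertex_ball V H v' (1/2)).
  split; [apply open_vertex_ball; lra|]. split; [apply vertex_ball_center; auto; lra|].
  split; [apply open_vertex_ball; lra|]. split; [apply vertex_ball_center; auto; lra|].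
  intros x [a [-> [Ha Hav]]] [a' [Ea [_ Hav']]]. injection Ea as <-.
  pose proof (valid_weight_le1 V H Hg a v v' Ha Hvv'). lra.
Qed.

Lemma separated_vtx_edge v w u u' w' :
  vtx_pt V v w -> on_edge V H u u' w' -> separated V H (P1 w) (P1 w').
Proof.
  intros Hv E'. destruct (on_edge_weights V H u u' w' E') as [Hs [Hu Hu']].
  assert (Hsep : forall eps Ne, open_in V H Ne -> Ne (P1 w') -> 0 < eps <= 1 ->
    (forall a, valid V H (P1 a) -> 1 - eps < a v -> ~ Ne (P1 a)) -> separated V H (P1 w) (P1 w')).
  { intros eps Ne One Hne He D. exists (vertex_ball V H v eps), Ne.
    split; [apply open_vertex_ball; auto|]. split; [apply vertex_ball_center; auto; lra|].
    split; [|split]; auto. intros x [a [-> [Ha Hav]]]. apply (D a); auto. }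
  destruct (classic (v = u)) as [->|Hvu]; [|destruct (classic (v = u')) as [->|Hvu']].
  - apply (Hsep (w' u' / 2) (edge_ball V H u u' w' (w' u' / 2)));
      [apply open_edge_ball|apply edge_ball_center; auto; lra|lra|].
    intros a _ Hau [a' [Ea [_ Hlt]]]. injection Ea as <-. split_Rabs; lra.
  - apply (Hsep (w' u / 2) (edge_ball V H u u' w' (w' u / 2)));
      [apply open_edge_ball|apply edge_ball_center; auto; lra|lra|].
    intros a _ Hau' [a' [Ea [Ea' Hlt]]]. injection Ea as <-.
    destruct (on_edge_weights V H u u' a Ea'). split_Rabs; lra.
  - apply (Hsep (1/2) (edge_ball V H u u' w' 1));
      [apply open_edge_ball|apply edge_ball_center; auto; lra|lra|].
    intros a _ Hav [a' [Ea [Ea' _]]]. injection Ea as <-.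
    destruct (on_edge_support V H u u' a v Ea'); auto; lra.
Qed.

Lemma separated_vtx_end v w b :
  vtx_pt V v w -> is_end V H b -> separated V H (P1 w) (PEnd b).
Proof.
  intros Hv Hb. destruct (Hlf v) as [l Hl].
  exists (vertex_ball V H v (1/2)), (Chat V H (v :: l) b).
  split; [apply open_vertex_ball; lra|]. split; [apply vertex_ball_center; auto; lra|].
  split; [apply open_Chat; auto|]. split; [apply Chat_center; auto|].
  intros x [a [-> [_ Hav]]] [_ [[y [a' [Ea [Hy Cy]]]]|[[y [y' [a' [Ea [E Cyy']]]]]|[c [Ec _]]]]];
    try discriminate; injection Ea as <-.
  - apply in_C_notin in Cy. destruct Hy as [_ Hy].
    destruct (classic (v = y)) as [->|Hvy]; [apply Cy; left; auto|].
    rewrite Hy in Hav; auto; lra.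
  - pose proof (proj1 E) as Eyy'.
    destruct (on_edge_support V H y y' a v E) as [<-| <-]; [lra| |];
      destruct Cyy' as [C|C]; apply in_C_notin in C; apply C; simpl; auto.
    right; apply Hl, (proj1 Hg); auto.
Qed.

Lemma separated_edge_edge u v w1 u' v' w2 :
  on_edge V H u v w1 -> on_edge V H u' v' w2 -> w1 <> w2 -> separated V H (P1 w1) (P1 w2).
Proof.
  intros E1 E2 Hne.
  assert (Hsame : forall w, on_edge V H u v w -> w <> w1 -> separated V H (P1 w1) (P1 w)).
  { intros w E Hw. assert (Hwu : w1 u <> w u) by (intro; apply Hw; symmetry; eapply on_edge_eq; eauto).
    set (d := Rabs (w1 u - w u) / 2).
    assert (Hd : 0 < d) by (apply Rdiv_lt_0_compat; [apply Rabs_pos_lt|]; lra).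
    exists (edge_ball V H u v w1 d), (edge_ball V H u v w d).
    split; [apply open_edge_ball|]. split; [apply edge_ball_center; auto|].
    split; [apply open_edge_ball|]. split; [apply edge_ball_center; auto|].
    intros x [a [-> [_ Ha]]] [a' [Ea [_ Ha']]]. injection Ea as <-.
    unfold d in *. split_Rabs; lra. }
  destruct (classic ((u = u' /\ v = v') \/ (u = v' /\ v = u'))) as [[[-> ->]|[-> ->]]|Hends].
  - apply Hsame; auto.
  - apply Hsame; auto. apply on_edge_sym; auto.
  - exists (edge_ball V H u v w1 1), (edge_ball V H u' v' w2 1).
    split; [apply open_edge_ball|]. split; [apply edge_ball_center; auto; lra|].
    split; [apply open_edge_ball|]. split; [apply edge_ball_center; auto; lra|].
    intros x [a [-> [Ea _]]] [a' [Ea' [Ea'' _]]]. injection Ea' as <-.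
    apply Hends; eapply on_edge_ends; eauto.
Qed.

Lemma separated_edge_end u v w b :
  on_edge V H u v w -> is_end V H b -> separated V H (P1 w) (PEnd b).
Proof.
  intros E Hb. exists (edge_ball V H u v w 1), (Chat V H (u :: v :: nil) b).
  split; [apply open_edge_ball|]. split; [apply edge_ball_center; auto; lra|].
  split; [apply open_Chat; auto|]. split; [apply Chat_center; auto|].
  intros x [a [-> [Ea _]]] [_ [[y [a' [Ea' [Hy _]]]]|[[y [y' [a' [Ea' [E' Cyy']]]]]|[c [Ec _]]]]];
    try discriminate; injection Ea' as <-.
  - eapply vtx_pt_not_on_edge; eauto.
  - destruct (on_edge_ends V H Hg _ _ _ _ _ Ea E') as [[<- <-]|[<- <-]];
      destruct Cyy' as [C|C]; apply in_C_notin in C; apply C; simpl; auto.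
Qed.

Lemma in_C_touch_tail_in S a b ra rb s t :
  is_end V H a -> is_end V H b -> a ra -> b rb ->
  in_C V H S a s -> in_C V H S b t -> s = t \/ H s t ->
  exists x, tail_in V H S ra x /\ tail_in V H S rb x.
Proof.
  intros Ha Hb Hra Hrb Cs Ct Hst. exists t; split; [|eapply in_C_tail_in; eauto].
  pose proof (in_C_tail_in V H S a ra s Hg Ha Hra Cs) as Hras.
  destruct Hst as [<-|Hst]; auto.
  eapply tail_in_conn; eauto. apply conn_edge; auto; eapply in_C_notin; eauto.
Qed.

Lemma separated_end_end a b :
  is_end V H a -> is_end V H b -> a <> b -> separated V H (PEnd a) (PEnd b).
Proof.
  intros Ha Hb Hab.
  destruct (end_inhabited V H a Ha) as [ra Hra], (end_inhabited V H b Hb) as [rb Hrb].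
  assert (Hnequiv : ~ ray_equiv V H ra rb) by (intro; apply Hab; eapply end_eq; eauto).
  apply not_all_ex_not in Hnequiv as [S HS].
  assert (Htouch : forall s t, in_C V H S a s -> in_C V H S b t -> s = t \/ H s t -> False)
    by (intros s t Cs Ct Hst; apply HS; apply (in_C_touch_tail_in S a b ra rb s t); auto).
  exists (Chat V H S a), (Chat V H S b).
  split; [apply open_Chat; auto|]. split; [apply Chat_center; auto|].
  split; [apply open_Chat; auto|]. split; [apply Chat_center; auto|].
  intros x [Vx [[y [w [-> [Hy Cy]]]]|[[y [y' [w [-> [E Cyy']]]]]|[c [-> [r [z [Hcr [Cz Hrz]]]]]]]]]
           [_ [[y0 [w0 [Ex [Hy0 Cy0]]]]|[[y0 [y0' [w0 [Ex [E0 Cyy0]]]]]|[c0 [Ex [r0 [z0 [Hcr0 [Cz0 Hrz0]]]]]]]]];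
    try discriminate; injection Ex as <-.
  - rewrite (vtx_pt_inj V _ _ _ Hy Hy0) in Cy. apply (Htouch y0 y0); auto.
  - eapply vtx_pt_not_on_edge; eauto.
  - eapply vtx_pt_not_on_edge; eauto.
  - pose proof (proj1 E) as Eyy'. pose proof (proj1 Hg _ _ Eyy').
    destruct (on_edge_ends V H Hg _ _ _ _ _ E E0) as [[<- <-]|[<- <-]];
      destruct Cyy' as [C|C], Cyy0 as [C0|C0]; eapply Htouch; eauto.
  - apply (Htouch z0 z0); auto.
    apply (in_C_of_tail_in V H Hg S a c r z z0); auto. exists r0; auto.
Qed.

Lemma separated_points p q : valid V H p -> valid V H q -> p <> q -> separated V H p q.
Proof.
  destruct p as [w|a], q as [w'|b]; simpl;
    [intros [[v Hv]|[u [v Ev]]] [[v' Hv']|[u' [v' Ev']]] Hne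
    |intros [[v Hv]|[u [v Ev]]] Hb Hne
    |intros Ha [[v' Hv']|[u' [v' Ev']]] Hne
    |intros Ha Hb Hne].
  - apply (separated_vtx_vtx v v'); auto; congruence.
  - eapply separated_vtx_edge; eauto.
  - apply separated_sym; eapply separated_vtx_edge; eauto.
  - eapply separated_edge_edge; eauto; congruence.
  - eapply separated_vtx_end; eauto.
  - eapply separated_edge_end; eauto.
  - apply separated_sym; eapply separated_vtx_end; eauto.
  - apply separated_sym; eapply separated_edge_end; eauto.
  - apply separated_end_end; auto; congruence.
Qed.

End Hausdorff.

Lemma compact_interval_ind (Q : (R -> Prop) -> Prop) a b :
  a <= b ->
  (forall T T' : R -> Prop, (forall u, T u -> T' u) -> Q T' -> Q T) ->
  (forall T1 T2, Q T1 -> Q T2 -> Q (fun u => T1 u \/ T2 u)) ->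
  (forall t, a <= t <= b -> exists eps, 0 < eps /\ Q (fun u => t - eps < u < t + eps)) ->
  Q (fun u => a <= u <= b).
Proof.
  intros Hab Qmono Qunion Qlocal.
  set (E := fun s => a <= s <= b /\ Q (fun u => a <= u <= s)).
  assert (Ea : E a).
  { split; [lra|]. destruct (Qlocal a) as [e [He Qa]]; [lra|].
    eapply Qmono; [|exact Qa]. intros u Hu; simpl; lra. }
  assert (Ebound : bound E) by (exists b; intros s [Hs _]; lra).
  destruct (completeness E Ebound (ex_intro _ a Ea)) as [c [Hub Hlub]].
  assert (Hac : a <= c) by (apply Hub; auto).
  assert (Hcb : c <= b) by (apply Hlub; intros s [Hs _]; lra).
  destruct (Qlocal c) as [e [He Qc]]; [lra|].
  assert (exists s, E s /\ c - e < s) as [s [[Hs Qs] Hes]].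
  { apply NNPP; intro Hn. assert (c <= c - e); [|lra].
    apply Hlub. intros s Es. apply Rnot_lt_le. intro; apply Hn; eauto. }
  (* The sup c is b: otherwise E would contain min (c + e/2) b > c. *)
  set (m := Rmin (c + e/2) b).
  assert (Em : E m).
  { split; [split; [apply Rmin_glb; lra|apply Rmin_r]|].
    eapply Qmono; [|apply (Qunion _ _ Qs Qc)]. intros u Hu; simpl.
    assert (m <= c + e/2) by apply Rmin_l.
    destruct (Rle_dec u s); [left; lra|right; lra]. }
  assert (Hmc : m <= c) by (apply Hub; auto).
  assert (Hmb : m = b) by (unfold m in *; revert Hmc; apply Rmin_case_strong; lra).
  rewrite Hmb in Em. apply Em.
Qed.

Lemma cos_sin_on_circle t : on_circle (cos t, sin t).
Proof. unfold on_circle; simpl. pose proof (sin2_cos2 t). unfold Rsqr in *; lra. Qed.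

Lemma on_circle_cos_sin z : on_circle z -> exists t, 0 <= t <= 2 * PI /\ z = (cos t, sin t).
Proof.
  destruct z as [x y]; unfold on_circle; simpl; intro Hz.
  assert (Hx : -1 <= x <= 1) by nra. pose proof (acos_bound x). pose proof PI_RGT_0.
  assert (Hy2 : 1 - x² = y²) by (unfold Rsqr; lra).
  destruct (Rle_dec 0 y).
  - exists (acos x); split; [lra|]. rewrite cos_acos, sin_acos, Hy2, sqrt_Rsqr; auto.
  - exists (2 * PI - acos x); split; [lra|].
    rewrite cos_minus, sin_minus, cos_2PI, sin_2PI, cos_acos, sin_acos, Hy2; auto.
    rewrite (Rsqr_neg y), sqrt_Rsqr; [|lra]. f_equal; ring.
Qed.

Lemma cos_sin_continuous t eps : 0 < eps -> exists d, 0 < d /\ forall u, Rabs (u - t) < d ->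
  Rabs (cos u - cos t) < eps /\ Rabs (sin u - sin t) < eps.
Proof.
  intros He.
  destruct (continuity_cos t eps He) as [d1 [Hd1 H1]].
  destruct (continuity_sin t eps He) as [d2 [Hd2 H2]].
  exists (Rmin d1 d2); split; [apply Rmin_glb_lt; auto|].
  intros u Hu. destruct (Req_dec u t) as [->|Hne].
  - rewrite !Rminus_diag, Rabs_R0; auto.
  - pose proof (Rmin_l d1 d2); pose proof (Rmin_r d1 d2). split.
    + apply (H1 u); split; [split; [exact I|auto]|]. simpl; unfold R_dist; lra.
    + apply (H2 u); split; [split; [exact I|auto]|]. simpl; unfold R_dist; lra.
Qed.

Section ClosedEmbedding.
Variable V : Type.
Variable H : V -> V -> Prop.
Hypothesis Hg : graph V H.
Hypothesis Hlf : locally_finite V H.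
Variable g : R * R -> point V.
Hypothesis g_valid : forall z, on_circle z -> valid V H (g z).
Hypothesis g_cont : forall O, open_in V H O -> circ_open (fun z => O (g z)).

Definition image_compl (U : R * R -> Prop) (q : point V) : Prop :=
  exists z, on_circle z /\ ~ U z /\ q = g z.

Definition nbhd_misses_arc (U : R * R -> Prop) (q : point V) (T : R -> Prop) : Prop :=
  exists N, has_nbhd V H q N /\
    forall u, T u -> ~ U (cos u, sin u) -> ~ N (g (cos u, sin u)).

Lemma nbhd_misses_arc_local U q t : circ_open U -> valid V H q -> ~ image_compl U q ->
  exists eps, 0 < eps /\ nbhd_misses_arc U q (fun u => t - eps < u < t + eps).
Proof.
  intros OU Hq Hqim. set (z := (cos t, sin t)).
  destruct (classic (U z)) as [Uz|nUz].
  - destruct (OU z (cos_sin_on_circle t) Uz) as [eps [He Hbox]].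
    destruct (cos_sin_continuous t eps He) as [d [Hd Hcs]].
    exists d; split; auto. exists (fun _ => True); split; [apply has_nbhd_full; auto|].
    intros u Hu nUu _. apply nUu. destruct (Hcs u) as [Hc Hs]; [split_Rabs; lra|].
    apply Hbox; auto. apply cos_sin_on_circle.
  - assert (Hne : g z <> q) by (intro Ez; apply Hqim; exists z; split; [apply cos_sin_on_circle|auto]).
    destruct (separated_points V H Hg Hlf (g z) q (g_valid z (cos_sin_on_circle t)) Hq Hne)
      as [Np [Nq [ONp [Npz [ONq [Nqq D]]]]]].
    destruct (g_cont Np ONp z (cos_sin_on_circle t) Npz) as [eps [He Hbox]].
    destruct (cos_sin_continuous t eps He) as [d [Hd Hcs]].
    exists d; split; auto. exists Nq; split; [apply ONq; auto|].
    intros u Hu _ HNq. destruct (Hcs u) as [Hc Hs]; [split_Rabs; lra|].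
    apply (D _ (Hbox _ (cos_sin_on_circle u) Hc Hs) HNq).
Qed.

(* The circle is compact and |H| is Hausdorff, so the image of the closed set ~ U is closed. *)
Lemma open_in_image_compl U : circ_open U -> open_in V H (fun q => ~ image_compl U q).
Proof.
  intros OU q Hq Hqim.
  assert (Hcover : nbhd_misses_arc U q (fun u => 0 <= u <= 2 * PI)).
  { apply compact_interval_ind.
    - pose proof PI_RGT_0; lra.
    - intros T T' TT' [N [HN HNT']]; exists N; split; auto.
    - intros T1 T2 [N1 [HN1 HNT1]] [N2 [HN2 HNT2]]. exists (fun x => N1 x /\ N2 x).
      split; [apply has_nbhd_inter; auto|].
      intros u [Hu|Hu] nUu [HN1u HN2u]; [eapply HNT1|eapply HNT2]; eauto.
    - intros t _. apply nbhd_misses_arc_local; auto. }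
  destruct Hcover as [N [HN HNarc]]. eapply has_nbhd_mono; [exact HN|].
  intros x Nx [z [Hz [nUz ->]]]. destruct (on_circle_cos_sin z Hz) as [t [Ht ->]].
  apply (HNarc t Ht nUz Nx).
Qed.

End ClosedEmbedding.

Definition lift_end V (G : V -> V -> Prop) (a : (nat -> V) -> Prop) : (nat -> V) -> Prop :=
  fun r' => is_ray V G r' /\ exists r, a r /\ ray_equiv V G r r'.

Definition lift_point V (G : V -> V -> Prop) (p : point V) : point V :=
  match p with
  | P1 w => P1 w
  | PEnd a => PEnd (lift_end V G a)
  end.

Section Lift.
Variable V : Type.
Variables G F : V -> V -> Prop.
Hypothesis Gg : graph V G.
Hypothesis Fg : graph V F.
Hypothesis FG : subgraph V F G.
Hypothesis FG_equiv : forall r1 r2, is_ray V F r1 -> is_ray V F r2 ->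
  (ray_equiv V F r1 r2 <-> ray_equiv V G r1 r2).

Lemma on_edge_subgraph u v w : on_edge V F u v w -> on_edge V G u v w.
Proof. intros [Huv E]; split; auto. Qed.

Lemma lift_end_mem a r : is_end V F a -> a r -> lift_end V G a r.
Proof.
  intros Ha Har. pose proof (is_ray_subgraph V F G r FG (end_is_ray V F a r Ha Har)).
  split; auto. exists r; split; auto. apply ray_equiv_refl; auto.
Qed.

Lemma is_end_lift a : is_end V F a -> is_end V G (lift_end V G a).
Proof.
  intros Ha. destruct (end_inhabited V F a Ha) as [r0 Har0].
  pose proof (end_is_ray V F a r0 Ha Har0) as Hr0.
  exists r0; split; [apply (is_ray_subgraph V F G); auto|]. intros r'; split.
  - intros [Hr' [r [Har E]]]. split; auto.
    apply (ray_equiv_trans V G r0 r r' Gg); auto.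
    apply FG_equiv; [auto|eapply end_is_ray; eauto|eapply end_ray_equiv; eauto].
  - intros [Hr' E]; split; auto; exists r0; auto.
Qed.

Lemma valid_lift_point p : valid V F p -> valid V G (lift_point V G p).
Proof.
  destruct p as [w|a]; simpl; [|apply is_end_lift].
  intros [Hv|[u [v E]]]; [left; auto|right; exists u, v; apply on_edge_subgraph; auto].
Qed.

Lemma lift_point_inj p q : valid V F p -> valid V F q -> lift_point V G p = lift_point V G q -> p = q.
Proof.
  destruct p as [w|a], q as [w'|b]; simpl; intros Hp Hq E; try discriminate.
  - injection E as ->; auto.
  - injection E as Eab. destruct (end_inhabited V F a Hp) as [ra Hra].
    pose proof (lift_end_mem a ra Hp Hra) as Hlift. rewrite Eab in Hlift.
    destruct Hlift as [_ [r [Hbr E]]].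
    f_equal. symmetry. apply (end_eq V F b a r ra Fg Hq Hp Hbr Hra).
    apply FG_equiv; auto; [apply (end_is_ray V F b)|apply (end_is_ray V F a)]; auto.
Qed.

Lemma in_C_lift S a x : is_end V F a -> in_C V F S a x -> in_C V G S (lift_end V G a) x.
Proof.
  intros Ha [r [Har Hrx]]. exists r; split; [apply lift_end_mem; auto|].
  eapply tail_in_subgraph; eauto.
Qed.

Lemma Chat_lift S a q : is_end V F a -> Chat V F S a q ->
  Chat V G S (lift_end V G a) (lift_point V G q).
Proof.
  intros Ha [Hq [[x [w [-> [Hx Cx]]]]|[[x [y [w [-> [E Cxy]]]]]|[b [-> [r [x [Hbr [Cx Hrx]]]]]]]]];
    split; try (apply valid_lift_point; auto); simpl.
  - left; exists x, w; split; [|split]; auto. apply in_C_lift; auto.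
  - right; left; exists x, y, w; split; [|split]; [auto|apply on_edge_subgraph; auto|].
    destruct Cxy; [left|right]; apply in_C_lift; auto.
  - right; right; eexists; split; [reflexivity|]. exists r, x; split; [apply lift_end_mem; auto|].
    split; [apply in_C_lift; auto|eapply tail_in_subgraph; eauto].
Qed.

Lemma open_in_lift_preimage O : open_in V G O -> open_in V F (fun p => O (lift_point V G p)).
Proof.
  intros OO p Hp HOp. pose proof (OO _ (valid_lift_point p Hp) HOp) as Hnb.
  destruct p as [w|a]; simpl in Hnb.
  - destruct Hnb as [[v [w0 [Ew [Hv [eps [He HO]]]]]]|[[u [v [w0 [Ew [E [eps [He HO]]]]]]]|[a [Ea _]]]];
      try discriminate; injection Ew as <-.
    + left; exists v, w; split; [|split]; auto; exists eps; split; auto.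
      intros w' Hw' Hlt; apply (HO w'); auto. apply (valid_lift_point (P1 w')); auto.
    + destruct Hp as [[x Hx]|[u' [v' E']]];
        [exfalso; apply (vtx_pt_not_on_edge V G Gg x u v w Hx E)|].
      right; left; exists u', v', w; split; [|split]; auto; exists eps; split; auto.
      destruct (on_edge_ends V G Gg u v u' v' w E (on_edge_subgraph _ _ _ E')) as [[-> ->]|[-> ->]].
      * intros w' E'' Hlt; apply (HO w'); auto. apply on_edge_subgraph; auto.
      * intros w' E'' Hlt; apply (HO w'); [apply on_edge_sym, on_edge_subgraph; auto|].
        destruct (on_edge_weights V F u' v' w' E''), (on_edge_weights V F u' v' w E').
        split_Rabs; lra.
  - destruct Hnb as [[v [w0 [Ea _]]]|[[u [v [w0 [Ea _]]]]|[a0 [Ea [S HO]]]]]; try discriminate.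
    injection Ea as <-.
    right; right; exists a; split; auto; exists S. intros q Hq. apply HO, Chat_lift; auto.
Qed.

End Lift.

Theorem lemma1 (V : Type) (G F : V -> V -> Prop) :
  graph V G -> graph V F -> infinite_type V -> locally_finite V G ->
  subgraph V F G -> faithful V F G ->
  has_ham_circle F -> has_ham_circle G.
Proof.
  intros Gg Fg _ Glf FG [_ FG_equiv] [f [f_valid [f_inj [f_cont [f_open f_vertices]]]]].
  set (g := fun z => lift_point V G (f z)).
  assert (g_valid : forall z, on_circle z -> valid V G (g z))
    by (intros z Hz; apply (valid_lift_point V G F); auto).
  assert (g_inj : forall z z', on_circle z -> on_circle z' -> g z = g z' -> z = z')
    by (intros z z' Hz Hz' E; apply f_inj, (lift_point_inj V G F); auto).
  assert (g_cont : forall O, open_in V G O -> circ_open (fun z => O (g z)))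
    by (intros O OO; apply (f_cont (fun p => O (lift_point V G p))), open_in_lift_preimage; auto).
  exists g; split; [|split; [|split; [|split]]]; auto.
  - intros U OU. exists (fun q => ~ image_compl V g U q).
    split; [apply open_in_image_compl; auto|].
    intros z Hz; split.
    + intros Uz [z' [Hz' [nUz' E]]]. rewrite (g_inj z z') in Uz; auto.
    + intros Hnim. apply NNPP; intro nUz. apply Hnim; exists z; auto.
  - intros v. destruct (f_vertices v) as [z [Hz [w [Efz Hv]]]].
    exists z; split; auto. exists w; unfold g; rewrite Efz; auto.
Qed.
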